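(* Let $n\geq 3$ and let $F=\sigma_{n-1}$ be the $(n-1)$-th elementary symmetric function on $\mathbb{R}^n$. For every constant $B>0$ there exists a constant $K_0\geq 1$, depending only on $n$ and $B$, with the following property. Let $\lambda=(\lambda_1,\dots,\lambda_n)\in\Gamma_{n-1}$ satisfy $F(\lambda)\leq B$ and $$\lambda_1=\cdots=\lambda_m>\lambda_{m+1}\geq\cdots\geq\lambda_n$$ for some $1\le m\le n$. If $\lambda_n<-K_0$, then $$-\sum_{p\neq q}F^{pp,qq}\xi_p\xi_q+\frac{\left(\sum_i F^{ii}\xi_i\right)^2}{F}+2\sum_{i>m}\frac{F^{ii}\xi_i^2}{\lambda_1-\lambda_i}-\frac{F^{11}\xi_1^2}{\lambda_1}\geq 0$$ for every vector $\xi=(\xi_1,\dots,\xi_n)\in\mathbb{R}^n$ satisfying $\xi_i=0$ for all $1<i\leq m$. Here $F$, $F^{ii}$, $F^{pp,qq}$ are evaluated at $\lambda$.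
   Context: $\sigma_k(\lambda)$ denotes the $k$-th elementary symmetric function of $\lambda\in\mathbb{R}^n$ (with $\sigma_0=1$). Gårding's cone is $\Gamma_k=\{\lambda\in\mathbb{R}^n:\sigma_j(\lambda)>0,\ 1\le j\le k\}$. For $\lambda\in\mathbb{R}^n$, $(\lambda|i)$ denotes the vector in $\mathbb{R}^{n-1}$ obtained by deleting the $i$-th component, and $(\lambda|ij)$ the vector obtained by deleting the $i$-th and $j$-th components. Then $F^{ii}=\frac{\partial \sigma_{n-1}}{\partial\lambda_i}(\lambda)=\sigma_{n-2}(\lambda|i)$ and, for $p\neq q$, $F^{pp,qq}=\frac{\partial^2\sigma_{n-1}}{\partial\lambda_p\partial\lambda_q}(\lambda)=\sigma_{n-3}(\lambda|pq)$. The paper states the dependence of $K_0$ as ''depending only on $n$ and $\max F$'', i.e. on an upper bound for $F(\lambda)$. *)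

From HB Require Import structures.
From mathcomp Require Import all_boot all_order all_algebra.
From mathcomp Require Import reals.
Set Implicit Arguments. Unset Strict Implicit. Unset Printing Implicit Defensive.
Import Order.TTheory GRing.Theory Num.Theory.
Local Open Scope ring_scope.

Section Defs.
Variables (R : realType) (n : nat).

Definition sigma_del (k : nat) (S : {set 'I_n}) (lam : 'I_n -> R) : R :=
  \sum_(A : {set 'I_n} | (#|A| == k) && [disjoint A & S]) \prod_(i in A) lam i.

Definition sigma (k : nat) (lam : 'I_n -> R) : R := sigma_del k set0 lam.

Definition Gamma (k : nat) (lam : 'I_n -> R) : Prop :=
  forall j : nat, (1 <= j <= k)%N -> 0 < sigma j lam.

Definition Fii (lam : 'I_n -> R) (i : 'I_n) : R := sigma_del (n - 2) [set i] lam.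

Definition Fpq (lam : 'I_n -> R) (p q : 'I_n) : R :=
  sigma_del (n - 3) [set p; q] lam.

(* the k-th component (0-based) of a vector; 0 if out of range *)
Definition comp_at (v : 'I_n -> R) (k : nat) : R :=
  if (insub k : option 'I_n) is Some i then v i else 0.

End Defs.

From HB Require Import structures.
From mathcomp Require Import all_boot all_order all_algebra.
From mathcomp Require Import reals.
From mathcomp Require Import zify ring lra.
Import Order.TTheory GRing.Theory Num.Theory.
Local Open Scope ring_scope.
Set Implicit Arguments. Unset Strict Implicit. Unset Printing Implicit Defensive.

(* If -lambda_n > 1 and -lambda_n >= F (as is the case for K0 = 1 + B), the Garding
   cone forces lambda_n to be the only nonpositive entry.  With P = prod_i lambda_i and
   s = sum_i 1/lambda_i one then has P < 0, s < 0 and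
     F = P s,   F^{ii} = (P/lambda_i) (s - 1/lambda_i),
     F^{pp,qq} = P/(lambda_p lambda_q) (s - 1/lambda_p - 1/lambda_q).
   In the coordinates x_i = xi_i/lambda_i^2 the quantity becomes
   sum_i c_i x_i^2 + (P/s) (sum_i x_i)^2 for explicit c_i.  For i <> n there are weights
   w_i with c_i w_i >= 1 and sum_{i<>n} w_i <= V := (s - 1/lambda_n)/(-2P), so by
   Cauchy-Schwarz sum_{i<>n} c_i x_i^2 >= U^2/V with U = sum_{i<>n} x_i.  What is left is
   a binary quadratic form in (U, x_n), which is nonnegative as soon as s lambda_1 >= -1;
   this holds because every lambda_i, i <> n, exceeds -lambda_n while F <= -lambda_n. *)

Section ClosedForms.
Variables (R : realType) (n : nat).

Lemma sigma_del_codim1 (S : {set 'I_n}) (k : nat) (lam : 'I_n -> R) :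
  (k + #|S|).+1 = n ->
  sigma_del k S lam = \sum_(r in ~: S) \prod_(i in ~: (r |: S)) lam i.
Proof.
move=> hk; rewrite /sigma_del.
have inj : {in ~: S &, injective (fun r => ~: (r |: S))}.
  move=> r r' rS _ /setC_inj e.
  have : r \in r' |: S by rewrite -e setU11.
  by rewrite in_setU1 => /orP [/eqP //|]; move: rS; rewrite inE => /negbTE ->.
rewrite -(big_imset (fun A : {set 'I_n} => \prod_(i in A) lam i) inj) /=.
apply: eq_bigl => A; apply/andP/imsetP => [[/eqP cardA disjA] | [r rS ->]].
- have SsubCA : S \subset ~: A by rewrite -disjoints_subset disjoint_sym.
  have /cards1P [r CA] : #|~: A :\: S| == 1%N.
    have := cardsC A; rewrite cardsD (setIidPr SsubCA) card_ord cardA.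
    by move=> cardCA; apply/eqP; lia.
  have : r \in ~: A :\: S by rewrite CA set11.
  rewrite !inE => /andP [rS rA]; exists r; first by rewrite inE.
  apply/setP => i; rewrite !inE; case iS: (i \in S).
    by rewrite orbT; apply/negbTE; move/subsetP: SsubCA => /(_ i iS); rewrite inE.
  by move/setP: CA => /(_ i); rewrite !inE iS orbF => <-; rewrite negbK.
- split; last by rewrite disjoints_subset setCS subsetUr.
  by move: rS; rewrite cardsCs setCK card_ord cardsU1 inE => ->; apply/eqP; lia.
Qed.

Lemma sigma_predE (lam : 'I_n -> R) : (0 < n)%N ->
  sigma (n - 1) lam = \sum_r \prod_(i in ~: [set r]) lam i.
Proof.
move=> n_gt0; rewrite /sigma sigma_del_codim1 ?cards0; last by lia.
by apply: eq_big => [r | r _]; rewrite ?setU0 ?inE.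
Qed.

Variable lam : 'I_n -> R.
Hypothesis lam_neq0 : forall i, lam i != 0.
Let P := \prod_i lam i.
Let s := \sum_i (lam i)^-1.

Lemma prod_setC (A : {set 'I_n}) : \prod_(i in ~: A) lam i = P / \prod_(i in A) lam i.
Proof.
have prodA_neq0 : \prod_(i in A) lam i != 0 by apply/prodf_neq0 => i _.
have -> : P = \prod_(i in ~: A) lam i * \prod_(i in A) lam i.
  by rewrite /P (bigID (mem (~: A))) /=; congr (_ * _); apply: eq_bigl => i; rewrite inE negbK.
by rewrite mulfK.
Qed.

Lemma sum_inv_setC1 i : \sum_(r in ~: [set i]) (lam r)^-1 = s - (lam i)^-1.
Proof.
rewrite /s [in RHS](bigD1 i) //= addrC addrK.
by apply: eq_bigl => r; rewrite !inE.
Qed.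

Lemma sigma_del_codim1E (S : {set 'I_n}) (k : nat) : (k + #|S|).+1 = n ->
  sigma_del k S lam = P / \prod_(i in S) lam i * \sum_(r in ~: S) (lam r)^-1.
Proof.
move=> hk; rewrite sigma_del_codim1 // mulr_sumr; apply: eq_bigr => r.
by rewrite inE => rS; rewrite prod_setC big_setU1 //= invfM mulrA mulrAC.
Qed.

Lemma sigma_pred_prodE : (0 < n)%N -> sigma (n - 1) lam = P * s.
Proof.
move=> n_gt0; rewrite /sigma sigma_del_codim1E ?cards0; last by lia.
by rewrite big_set0 divr1; congr (_ * _); apply: eq_bigl => i; rewrite !inE.
Qed.

Lemma Fii_prodE i : (1 < n)%N -> Fii lam i = P / lam i * (s - (lam i)^-1).
Proof.
by move=> n_gt1; rewrite /Fii sigma_del_codim1E ?cards1 ?big_set1 ?sum_inv_setC1 //; lia.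
Qed.

Lemma Fpq_prodE p q : (2 < n)%N -> p != q ->
  Fpq lam p q = P / (lam p * lam q) * (s - (lam p)^-1 - (lam q)^-1).
Proof.
move=> n_gt2 pq; rewrite /Fpq sigma_del_codim1E; last by rewrite cards2 pq /=; lia.
rewrite big_setU1 ?big_set1 ?inE //=; congr (_ * _).
rewrite -sum_inv_setC1 [in RHS](bigD1 q) /=; last by rewrite !inE eq_sym.
rewrite addrC addrK; apply: eq_bigl => r; rewrite !inE.
by case: (r == p); case: (r == q).
Qed.

End ClosedForms.

Lemma prod_addr_const (R : comPzRingType) (I : finType) (A : {set I}) (f : I -> R) (t : R) :
  \prod_(i in A) (f i + t) =
  \sum_(J : {set I} | J \subset A) t ^+ #|A :\: J| * \prod_(i in J) f i.
Proof.
pose F i := if i \in A then f i else 0.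
pose G i := if i \in A then t else 1.
rewrite big_mkcond (eq_bigr (fun i => F i + G i)) => [|i _]; last first.
  by rewrite /F /G; case: (i \in A); rewrite ?add0r.
rewrite bigA_distr [RHS]big_mkcond /=; apply: eq_big => [//|J _].
rewrite (bigID (mem J)) /=; case: ifPn => [JA | /subsetPn [j jJ jA]]; last first.
  by rewrite (bigD1 j) //= jJ /F (negbTE jA) !mul0r.
rewrite mulrC; congr (_ * _).
  rewrite -prodr_const big_mkcond [RHS]big_mkcond; apply: eq_bigr => i _; rewrite /G !inE.
  by case: (i \in J); case: (i \in A).
by apply: eq_bigr => i iJ; rewrite iJ /F (subsetP JA i iJ).
Qed.

Section GardingCone.
Variables (R : realType) (n : nat).
Implicit Types lam : 'I_n -> R.

Lemma sigma_pred_shift lam t : (0 < n)%N ->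
  sigma (n - 1) (fun i => lam i + t) =
  \sum_(J : {set 'I_n}) (n - #|J|)%:R * t ^+ (n - 1 - #|J|) * \prod_(i in J) lam i.
Proof.
move=> n_gt0; rewrite sigma_predE //.
under eq_bigr => r _ do rewrite prod_addr_const.
rewrite (exchange_big_dep predT) //=; apply: eq_bigr => J _.
transitivity (\sum_(r in ~: J) t ^+ (n - 1 - #|J|) * \prod_(i in J) lam i).
  apply: eq_big => [r | r]; first by rewrite subsetC sub1set.
  rewrite subsetC sub1set inE => rJ; congr (_ ^+ _ * _).
  have := cardsC (r |: J); rewrite setDE -setCU card_ord cardsU1 rJ /=.
  by lia.
rewrite sumr_const -mulrA mulr_natl; congr (_ *+ _).
by rewrite cardsCs setCK card_ord.
Qed.

Lemma sum_card_prod (f : nat -> R) lam :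
  \sum_(J : {set 'I_n}) f #|J| * \prod_(i in J) lam i = \sum_(k < n.+1) f k * sigma k lam.
Proof.
have card_lt (J : {set 'I_n}) : (#|J| < n.+1)%N by rewrite ltnS -[X in (_ <= X)%N]card_ord max_card.
rewrite (partition_big (fun J : {set 'I_n} => inord #|J| : 'I_n.+1) predT) //=.
apply: eq_bigr => k _; rewrite /sigma /sigma_del big_distrr /=.
apply: eq_big => [J | J /eqP <-]; last by rewrite inordK.
rewrite disjoints_subset setC0 subsetT andbT.
by apply/eqP/eqP => [<- | ->]; [rewrite inordK | apply: val_inj; rewrite /= inordK].
Qed.

Lemma sigma0_ge0 lam : 0 <= sigma 0 lam.
Proof. by apply: sumr_ge0 => A /andP [/eqP /cards0_eq -> _]; rewrite big_set0. Qed.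

Lemma sigma_pred_shift_gt0 lam t : (1 < n)%N -> Gamma (n - 1) lam -> 0 <= t ->
  0 < sigma (n - 1) (fun i => lam i + t).
Proof.
move=> n_gt1 lam_Gamma t_ge0; rewrite sigma_pred_shift; last by lia.
rewrite (sum_card_prod (fun k => (n - k)%:R * t ^+ (n - 1 - k))).
have n1_lt : (n - 1 < n.+1)%N by lia.
rewrite (bigD1 (Ordinal n1_lt)) //= ltr_pwDl //.
  by rewrite subKn ?subnn ?mul1r ?mulr1 ?lam_Gamma //; lia.
apply: sumr_ge0 => k _; have [k_lt_n | k_ge_n] := ltnP k n; last first.
  by rewrite (_ : n - k = 0)%N ?mul0r //; lia.
rewrite mulr_ge0 ?mulr_ge0 ?exprn_ge0 //.
have [-> | k_gt0] := posnP k; first exact: sigma0_ge0.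
by apply/ltW/lam_Gamma; lia.
Qed.

(* Shifting by [- lam a] kills every term of [sigma (n - 1)] but the one omitting [a],
   which is [<= 0]; yet shifts by nonnegative constants stay positive. *)
Lemma Gamma_pred_second_min_gt0 lam a b : (1 < n)%N -> Gamma (n - 1) lam ->
  a != b -> lam b <= lam a -> (forall j, j != b -> lam a <= lam j) -> 0 < lam a.
Proof.
move=> n_gt1 lam_Gamma ab ba a_min; rewrite ltNge; apply/negP => a_le0.
have := sigma_pred_shift_gt0 n_gt1 lam_Gamma (_ : 0 <= - lam a).
rewrite oppr_ge0 => /(_ a_le0); apply/negP; rewrite -leNgt sigma_predE; last by lia.
rewrite (bigD1 a) //= [X in _ + X]big1 ?addr0 => [|r ra]; last first.
  by rewrite (bigD1 a) /= ?subrr ?mul0r // !inE eq_sym.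
rewrite (big_setD1 b) /= ?inE ?(eq_sym b) //.
rewrite mulr_le0_ge0 ?subr_le0 // prodr_ge0 // => i.
by rewrite !inE => /andP [ib _]; rewrite subr_ge0 a_min.
Qed.

End GardingCone.

Section ScalarInequalities.
Variable R : realFieldType.

Lemma quad_form_ge0 (a b c x y : R) : 0 < a -> b ^+ 2 <= a * c ->
  0 <= a * x ^+ 2 + 2 * b * x * y + c * y ^+ 2.
Proof.
move=> a_gt0 disc_le; rewrite -(pmulr_rge0 _ a_gt0).
have -> : a * (a * x ^+ 2 + 2 * b * x * y + c * y ^+ 2) =
          (a * x + b * y) ^+ 2 + (a * c - b ^+ 2) * y ^+ 2 by ring.
by rewrite addr_ge0 ?sqr_ge0 // mulr_ge0 ?sqr_ge0 ?subr_ge0.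
Qed.

Lemma quad_lower (c w x mu : R) : 0 < w -> 1 <= c * w ->
  2 * mu * x - mu ^+ 2 * w <= c * x ^+ 2.
Proof.
move=> w_gt0 cw_ge1; rewrite -subr_ge0.
have := @quad_form_ge0 w (-1) c mu x w_gt0; rewrite sqrrN expr1n mulrC => /(_ cw_ge1).
by congr (_ <= _); ring.
Qed.

Lemma sqr_sum_div_le_sum (I : finType) (P : pred I) (T x w : I -> R) (V : R) :
  0 < V -> \sum_(i | P i) w i <= V ->
  (forall i mu, P i -> 2 * mu * x i - mu ^+ 2 * w i <= T i) ->
  (\sum_(i | P i) x i) ^+ 2 / V <= \sum_(i | P i) T i.
Proof.
move=> V_gt0 sum_w_le T_ge; set U := \sum_(i | P i) x i; set mu := U / V.
apply: le_trans (ler_sum _ (fun i Pi => T_ge i mu Pi)).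
rewrite sumrB -!mulr_sumr -/U.
have -> : U ^+ 2 / V = 2 * mu * U - mu ^+ 2 * V by rewrite /mu; field; rewrite gt_eqF.
by rewrite lerD2l lerN2 ler_wpM2l ?sqr_ge0.
Qed.

(* The coefficient of [(xi_i / lam_i^2)^2] for [i > m] in the paper's quantity, where
   [P = prod lam], [s = sum 1/lam], [l = lam_i] and [l0 = lam_1]. *)
Definition tail_coef (P s l l0 : R) :=
  P * l * (l * s - 2) + 2 * P * l ^+ 2 * (l * s - 1) / (l0 - l).

Lemma tail_coef_weight_ge1 (P s l l0 : R) : 0 < l -> l < l0 -> P != 0 -> s <= 0 ->
  1 <= tail_coef P s l l0 * ((l^-1 - l0^-1) / (-2 * P)).
Proof.
move=> l_gt0 l_lt_l0 P_neq0 s_le0.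
have l0_gt0 : 0 < l0 := lt_trans l_gt0 l_lt_l0.
have -> : tail_coef P s l l0 * ((l^-1 - l0^-1) / (-2 * P)) =
          1 + - s * l * (l0 + l) / (2 * l0).
  rewrite /tail_coef; field.
  by rewrite P_neq0 !gt_eqF ?subr_gt0.
by rewrite lerDl; apply: divr_ge0; [apply: mulr_ge0; [apply: mulr_ge0 |] |]; lra.
Qed.

Lemma last_form_ge0 (P s l l0 U y : R) :
  l < 0 -> 0 < l0 -> P < 0 -> s < 0 -> 0 < s - l^-1 -> -1 <= s * l0 ->
  0 <= tail_coef P s l l0 * y ^+ 2 + U ^+ 2 / ((s - l^-1) / (-2 * P)) + P / s * (U + y) ^+ 2.
Proof.
move=> l_lt0 l0_gt0 P_lt0 s_lt0 sigma_gt0 sl0_ge.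
have u_gt0 : 0 < l * s by nra.
have ls_l0 : l * s * l0 <= - l by nra.
have l_neq0 : l != 0 by rewrite lt_eqF.
have ls_lt1 : l * s < 1.
  have : l * (s - l^-1) < 0 by nra.
  by rewrite mulrBr mulfV //; lra.
set V := (s - l^-1) / (-2 * P).
have V_gt0 : 0 < V by rewrite divr_gt0 //; lra.
have Ps_gt0 : 0 < P / s by rewrite -mulrNN -invrN divr_gt0 ?oppr_gt0.
have -> : tail_coef P s l l0 * y ^+ 2 + U ^+ 2 / V + P / s * (U + y) ^+ 2 =
   (V^-1 + P / s) * U ^+ 2 + 2 * (P / s) * U * y + (tail_coef P s l l0 + P / s) * y ^+ 2.
  by ring.
apply: quad_form_ge0; first by rewrite addr_gt0 ?invr_gt0.
rewrite -subr_ge0.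
have -> : (V^-1 + P / s) * (tail_coef P s l l0 + P / s) - (P / s) ^+ 2 =
    (P * l) ^+ 2 * ((2 * - l * (1 + l * s) - l * s * (l0 - l)) / (l * s * (l0 - l))).
  rewrite /V /tail_coef; field.
  by apply/and5P; split; apply/eqP; nra.
by rewrite mulr_ge0 ?sqr_ge0 // divr_ge0; nra.
Qed.

End ScalarInequalities.

Section DiagonalForm.
Variables (R : realType) (n : nat) (lam xi : 'I_n -> R).
Hypothesis n_gt2 : (2 < n)%N.
Hypothesis lam_neq0 : forall i, lam i != 0.

Let P := \prod_i lam i.
Let s := \sum_i (lam i)^-1.
Let y i := xi i / lam i.
Let x i := xi i / lam i ^+ 2.

Lemma sum_Fpq_offdiag :
  \sum_p \sum_(q | p != q) Fpq lam p q * xi p * xi q =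
  P * (s * (\sum_i y i) ^+ 2 - 2 * (\sum_i y i) * \sum_i x i)
  - \sum_i P * lam i * (lam i * s - 2) * x i ^+ 2.
Proof.
pose G p q := P * (y p * (s * y q - x q) - x p * y q).
have row_sum p : \sum_q G p q = P * (y p * (s * \sum_i y i - \sum_i x i) - x p * \sum_i y i).
  by rewrite -mulr_sumr sumrB -!mulr_sumr sumrB -mulr_sumr.
have row p : \sum_(q | p != q) Fpq lam p q * xi p * xi q = \sum_q G p q - G p p.
  rewrite [\sum_q _](bigD1 p) //= addrC addrK.
  apply: eq_big => [q | q pq]; first by rewrite eq_sym.
  by rewrite Fpq_prodE // -/P -/s /G /y /x; field; rewrite !lam_neq0.
under eq_bigr do rewrite row row_sum.
rewrite sumrB -mulr_sumr sumrB -!mulr_suml; congr (_ - _); first by ring.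
by apply: eq_bigr => i _; rewrite /G /y /x; field; rewrite lam_neq0.
Qed.

Lemma sum_Fii_mul :
  \sum_i Fii lam i * xi i = P * (s * \sum_i y i - \sum_i x i).
Proof.
rewrite mulr_sumr -sumrB mulr_sumr; apply: eq_bigr => i _.
by rewrite Fii_prodE // -/P -/s; [rewrite /y /x; field; rewrite lam_neq0 | lia].
Qed.

(* The left side is [- F * D^2 (log F) [xi, xi]] ([F] is affine in each [lam_i]). *)
Lemma log_hessian_diagE : P != 0 -> s != 0 ->
  - (\sum_p \sum_(q | p != q) Fpq lam p q * xi p * xi q)
  + (\sum_i Fii lam i * xi i) ^+ 2 / sigma (n - 1) lam =
  \sum_i P * lam i * (lam i * s - 2) * x i ^+ 2 + P / s * (\sum_i x i) ^+ 2.
Proof.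
move=> P_neq0 s_neq0; rewrite sum_Fpq_offdiag sum_Fii_mul sigma_pred_prodE // -/P -/s; last by lia.
by field; rewrite P_neq0 s_neq0.
Qed.

End DiagonalForm.

Section NegativeLastEntry.
Variables (R : realType) (n : nat) (lam xi : 'I_n -> R) (J : pred 'I_n) (i0 iL i2 : 'I_n).
Hypotheses (i0_neq_iL : i0 != iL) (i2_neq_iL : i2 != iL) (i2_neq_i0 : i2 != i0).
Hypothesis lam_gt0 : forall j, j != iL -> 0 < lam j.
Hypothesis lam_iL_lt : 1 < - lam iL.
Hypothesis sigma_gt0 : 0 < sigma (n - 1) lam.
Hypothesis sigma_le : sigma (n - 1) lam <= - lam iL.
Hypothesis J_i0 : ~~ J i0.
Hypothesis lam_J : forall j, J j -> lam j < lam i0.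
Hypothesis lam_notJ : forall j, ~~ J j -> lam j = lam i0.
Hypothesis xi_notJ : forall j, j != i0 -> ~~ J j -> xi j = 0.

Let P := \prod_i lam i.
Let s := \sum_i (lam i)^-1.
Let x i := xi i / lam i ^+ 2.

Lemma three_distinct_gt2 : (2 < n)%N.
Proof.
rewrite -[n]card_ord; apply: leq_trans (max_card (i0 |: (iL |: [set i2]))).
rewrite !cardsU1 cards1 !inE negb_or i0_neq_iL.
by rewrite ![i0 == _]eq_sym ![iL == _]eq_sym i2_neq_i0 i2_neq_iL.
Qed.

Lemma lam_iL_lt0 : lam iL < 0.
Proof. by rewrite -oppr_gt0 (lt_trans ltr01). Qed.

Lemma lam_neq0 j : lam j != 0.
Proof.
have [-> | /lam_gt0 /lt0r_neq0 //] := eqVneq j iL.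
exact: ltr0_neq0 lam_iL_lt0.
Qed.

Lemma J_iL : J iL.
Proof.
apply/negPn/negP => /lam_notJ lam_iL_eq.
by move: (lam_gt0 i0_neq_iL); rewrite -lam_iL_eq ltNge (ltW lam_iL_lt0).
Qed.

Lemma prod_lt0 : P < 0.
Proof.
rewrite /P (bigD1 iL) //= nmulr_rlt0 ?lam_iL_lt0 //.
by apply: prodr_gt0 => j; exact: lam_gt0.
Qed.

Lemma sigma_pred_eq : sigma (n - 1) lam = P * s.
Proof. by rewrite (sigma_pred_prodE lam_neq0) //; have := three_distinct_gt2; lia. Qed.

Lemma sum_inv_lt0 : s < 0.
Proof. by have := sigma_gt0; rewrite sigma_pred_eq (nmulr_rgt0 _ prod_lt0). Qed.

Lemma sum_inv_others : s - (lam iL)^-1 = \sum_(j | j != iL) (lam j)^-1.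
Proof. by rewrite /s (bigD1 iL) //= addrC addrK. Qed.

Lemma inv_le_sum_inv_others j : j != iL -> (lam j)^-1 <= s - (lam iL)^-1.
Proof.
move=> j_neq_iL; rewrite sum_inv_others (bigD1 j) //= lerDl.
by apply: sumr_ge0 => k /andP [k_neq_iL _]; rewrite invr_ge0 ltW ?lam_gt0.
Qed.

Lemma sum_inv_others_gt0 : 0 < s - (lam iL)^-1.
Proof. by apply: lt_le_trans (inv_le_sum_inv_others i0_neq_iL); rewrite invr_gt0 lam_gt0. Qed.

Lemma lam_gt_opp_iL j : j != iL -> - lam iL < lam j.
Proof.
move=> j_neq_iL; have opp_iL_gt0 : 0 < - lam iL by rewrite oppr_gt0 lam_iL_lt0.
rewrite -ltf_pV2 ?posrE ?lam_gt0 //; apply: le_lt_trans (inv_le_sum_inv_others j_neq_iL) _.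
by rewrite invrN ltrBlDr addNr sum_inv_lt0.
Qed.

(* Every [lam j], [j != iL], exceeds [q = - lam iL > 1], so [Q = prod_(j != iL) lam j >= q lam i0];
   then [F = q (- s) Q <= q] forces [- s lam i0 < 1]. *)
Lemma sum_inv_mul_lam_i0_ge : -1 <= s * lam i0.
Proof.
set q := - lam iL; have q_gt1 : 1 < q := lam_iL_lt; have q_gt0 := lt_trans ltr01 q_gt1.
set Q := \prod_(j | j != iL) lam j.
have Q_ge : lam i0 * q <= Q.
  rewrite /Q (bigD1 i0) //= (bigD1 i2) /=; last by rewrite i2_neq_iL i2_neq_i0.
  rewrite ler_pM2l ?lam_gt0 // -[q]mulr1.
  rewrite ler_pM ?ler01 ?(ltW q_gt0) ?(ltW (lam_gt_opp_iL i2_neq_iL)) //.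
  have := @ler_prod R _ (index_enum _) (fun j => (j != iL) && (j != i0) && (j != i2)) (fun=> 1) lam.
  rewrite big1_eq; apply=> j /andP [/andP [j_neq_iL _] _].
  by rewrite ler01 ltW // (lt_trans q_gt1 (lam_gt_opp_iL j_neq_iL)).
have sigma_eq : sigma (n - 1) lam = q * (- s * Q).
  by rewrite sigma_pred_eq /P (bigD1 iL) //= -/Q /q; ring.
have sQ_le1 : - s * Q <= 1 by rewrite -(ler_pM2l q_gt0) mulr1 -sigma_eq.
have : - s * lam i0 * q < 1 * q.
  rewrite mul1r; apply: le_lt_trans q_gt1; apply: le_trans sQ_le1.
  by rewrite -mulrA ler_wpM2l // oppr_ge0 ltW // sum_inv_lt0.
by rewrite ltr_pM2r // mulNr ltrNl => /ltW.
Qed.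

Lemma N2_mul_prod_gt0 : 0 < -2 * P.
Proof. by rewrite nmulr_lgt0 ?prod_lt0 // oppr_lt0. Qed.

Let coef i :=
  if i == i0 then - P * lam i0
  else if J i then tail_coef P s (lam i) (lam i0)
  else P * lam i * (lam i * s - 2).

Let weight i :=
  if i == i0 then (- P * lam i0)^-1 else ((lam i)^-1 - (lam i0)^-1) / (-2 * P).

Lemma concavity_form_coefE :
  - (\sum_p \sum_(q | p != q) Fpq lam p q * xi p * xi q)
  + (\sum_i Fii lam i * xi i) ^+ 2 / sigma (n - 1) lam
  + 2 * (\sum_(i | J i) Fii lam i * xi i ^+ 2 / (lam i0 - lam i))
  - Fii lam i0 * xi i0 ^+ 2 / lam i0
  = \sum_i coef i * x i ^+ 2 + P / s * (\sum_i x i) ^+ 2.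
Proof.
have P_neq0 := ltr0_neq0 prod_lt0; have s_neq0 := ltr0_neq0 sum_inv_lt0.
have n_gt1 : (1 < n)%N by have := three_distinct_gt2; lia.
have coefE i : coef i * x i ^+ 2 = P * lam i * (lam i * s - 2) * x i ^+ 2
    + (if J i then 2 * (Fii lam i * xi i ^+ 2 / (lam i0 - lam i)) else 0)
    - (if i == i0 then Fii lam i0 * xi i0 ^+ 2 / lam i0 else 0).
  rewrite /coef /x; have [-> | _] := eqVneq i i0.
    by rewrite (negbTE J_i0) (Fii_prodE lam_neq0) // -/P -/s; field; rewrite lam_neq0.
  case: ifP => [Ji | _]; last by rewrite addr0 subr0.
  have lam_i0_neq : lam i0 - lam i != 0 by rewrite gt_eqF // subr_gt0 lam_J.
  by rewrite (Fii_prodE lam_neq0) // -/P -/s /tail_coef; field; rewrite lam_neq0 lam_i0_neq.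
rewrite (log_hessian_diagE xi three_distinct_gt2 lam_neq0) // -/P -/s.
rewrite (eq_bigr _ (fun i _ => coefE i)) sumrB big_split /= -!big_mkcond big_pred1_eq.
by rewrite -mulr_sumr /x; ring.
Qed.

Lemma coef_lower i mu : i != iL ->
  2 * mu * x i - mu ^+ 2 * weight i <= coef i * x i ^+ 2.
Proof.
move=> i_neq_iL; have P_lt0 := prod_lt0; have lam_i0_gt0 := lam_gt0 i0_neq_iL.
rewrite /coef /weight; have [-> | i_neq_i0] := eqVneq i i0.
  have c_gt0 : 0 < - P * lam i0 by rewrite mulr_gt0 ?oppr_gt0.
  by apply: quad_lower; rewrite ?invr_gt0 // mulfV ?lt0r_neq0.
case: ifP => [Ji | notJi].
  apply: quad_lower; last first.
    by rewrite tail_coef_weight_ge1 ?lam_gt0 ?lam_J ?ltr0_neq0 ?ltW ?sum_inv_lt0.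
  by rewrite divr_gt0 ?N2_mul_prod_gt0 ?subr_gt0 ?ltf_pV2 ?posrE ?lam_gt0 ?lam_J.
by rewrite /x xi_notJ ?notJi // lam_notJ ?notJi // subrr !mul0r expr0n /= !mulr0 subrr.
Qed.

Lemma sum_weight_le : \sum_(i | i != iL) weight i <= (s - (lam iL)^-1) / (-2 * P).
Proof.
have P_neq0 := ltr0_neq0 prod_lt0; have lam_i0_neq0 := lam_neq0 i0.
set c := (lam i0)^-1 / (-2 * P).
have c_ge0 : 0 <= c by rewrite divr_ge0 ?invr_ge0 ?ltW ?lam_gt0 ?N2_mul_prod_gt0.
have gap_i0 : (lam i0)^-1 / (-2 * P) - weight i0 = - c.
  by rewrite /weight eqxx /c; field; rewrite P_neq0 lam_i0_neq0.
have gap j : j != i0 -> (lam j)^-1 / (-2 * P) - weight j = c.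
  by move=> j_neq_i0; rewrite /weight (negbTE j_neq_i0) /c; field; rewrite P_neq0 !lam_neq0.
rewrite sum_inv_others mulr_suml -subr_ge0 -sumrB (bigD1 i0) //= gap_i0.
rewrite (bigD1 i2) /=; last by rewrite i2_neq_iL i2_neq_i0.
rewrite gap // addrA addNr add0r sumr_ge0 // => j /andP [/andP [_ j_neq_i0] _].
by rewrite gap.
Qed.

Lemma concavity_form_ge0 :
  0 <= - (\sum_p \sum_(q | p != q) Fpq lam p q * xi p * xi q)
       + (\sum_i Fii lam i * xi i) ^+ 2 / sigma (n - 1) lam
       + 2 * (\sum_(i | J i) Fii lam i * xi i ^+ 2 / (lam i0 - lam i))
       - Fii lam i0 * xi i0 ^+ 2 / lam i0.
Proof.
rewrite concavity_form_coefE (bigD1 iL) //= [\sum_i x i](bigD1 iL) //= [x iL + _]addrC.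
set U := \sum_(i | i != iL) x i.
have coef_iL : coef iL = tail_coef P s (lam iL) (lam i0).
  by rewrite /coef eq_sym (negbTE i0_neq_iL) J_iL.
have V_gt0 : 0 < (s - (lam iL)^-1) / (-2 * P).
  by rewrite divr_gt0 ?sum_inv_others_gt0 ?N2_mul_prod_gt0.
have := @sqr_sum_div_le_sum R _ (fun i => i != iL) (fun i => coef i * x i ^+ 2) x weight _
  V_gt0 sum_weight_le (fun i mu i_neq_iL => coef_lower mu i_neq_iL).
rewrite -/U coef_iL => CS.
apply: le_trans (last_form_ge0 U (x iL) lam_iL_lt0 (lam_gt0 i0_neq_iL) prod_lt0
  sum_inv_lt0 sum_inv_others_gt0 sum_inv_mul_lam_i0_ge) _.
by rewrite lerD2r lerD2l.
Qed.

End NegativeLastEntry.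

Lemma comp_atE (R : realType) (n : nat) (v : 'I_n -> R) (k : nat) (k_lt_n : (k < n)%N) :
  comp_at v k = v (Ordinal k_lt_n).
Proof. by rewrite /comp_at insubT; congr v; exact: val_inj. Qed.
Arguments comp_atE {R n} v {k}.

Section SortedBlocks.
Variables (R : realType) (n m : nat) (lam : 'I_n -> R).
Hypothesis lam_head : forall i : 'I_n, (i < m)%N -> lam i = comp_at lam 0.
Hypothesis lam_m_lt : (m < n)%N -> comp_at lam m < comp_at lam 0.
Hypothesis lam_tail : forall i j : 'I_n, (m <= i)%N -> (i <= j)%N -> lam j <= lam i.

Lemma lam_tail_lt (j : 'I_n) : (m <= j)%N -> lam j < comp_at lam 0.
Proof.
move=> m_le_j; have m_lt_n := leq_ltn_trans m_le_j (ltn_ord j).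
by apply: le_lt_trans (lam_m_lt m_lt_n); rewrite (comp_atE _ m_lt_n) lam_tail.
Qed.

Lemma lam_nonincreasing (i j : 'I_n) : (i <= j)%N -> lam j <= lam i.
Proof.
move=> i_le_j; have [j_lt_m | m_le_j] := ltnP j m.
  by rewrite !lam_head // (leq_ltn_trans i_le_j j_lt_m).
have [i_lt_m | m_le_i] := ltnP i m; last exact: lam_tail.
by rewrite (lam_head i_lt_m) ltW // lam_tail_lt.
Qed.

End SortedBlocks.

Unset Implicit Arguments.

(* Indices are 0-based: paper's lambda_1 is comp_at lam 0, lambda_n is
   comp_at lam n.-1, and paper's index i > m corresponds to (m <= i)%N. *)
Theorem lemma3p1 (R : realType) (n : nat) (hn : (3 <= n)%N) (B : R) (hB : 0 < B) :
  exists K0 : R, 1 <= K0 /\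
  forall (lam : 'I_n -> R) (m : nat),
    Gamma (n - 1) lam ->
    sigma (n - 1) lam <= B ->
    (1 <= m <= n)%N ->
    (forall i : 'I_n, (i < m)%N -> lam i = comp_at lam 0) ->
    ((m < n)%N -> comp_at lam m < comp_at lam 0) ->
    (forall i j : 'I_n, (m <= i)%N -> (i <= j)%N -> lam j <= lam i) ->
    comp_at lam n.-1 < - K0 ->
    forall xi : 'I_n -> R,
      (forall i : 'I_n, (0 < i)%N -> (i < m)%N -> xi i = 0) ->
      0 <= - (\sum_(p : 'I_n) \sum_(q : 'I_n | p != q) Fpq lam p q * xi p * xi q)
           + (\sum_(i : 'I_n) Fii lam i * xi i) ^+ 2 / sigma (n - 1) lam
           + 2 * (\sum_(i : 'I_n | (m <= i)%N)
                    Fii lam i * xi i ^+ 2 / (comp_at lam 0 - lam i))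
           - comp_at (Fii lam) 0 * comp_at xi 0 ^+ 2 / comp_at lam 0.
Proof.
exists (1 + B); split; first by rewrite lerDl ltW.
move=> lam m lam_Gamma sigma_le /andP [m_gt0 _] lam_head lam_m_lt lam_tail lam_last xi xi_head.
have n_gt0 : (0 < n)%N by lia.
have n1_lt : (n.-1 < n)%N by lia.
have n2_lt : (n - 2 < n)%N by lia.
pose i0 := Ordinal n_gt0; pose iL := Ordinal n1_lt; pose i2 := Ordinal n2_lt.
rewrite (comp_atE _ n1_lt) -/iL in lam_last; rewrite !(comp_atE _ n_gt0) -/i0.
have lam_sorted := lam_nonincreasing lam_head lam_m_lt lam_tail.
have lam_i2_le j : j != iL -> lam i2 <= lam j.
  by rewrite -val_eqE /= => j_neq_iL; apply: lam_sorted; have := ltn_ord j; rewrite /i2 /=; lia.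
have lam_i2_gt0 : 0 < lam i2.
  apply: (Gamma_pred_second_min_gt0 (b := iL)) lam_i2_le => //.
  - by lia.
  - by rewrite -val_eqE /=; lia.
  - by apply: lam_sorted => /=; lia.
apply: (concavity_form_ge0 (J := fun i => (m <= i)%N) (i0 := i0) (iL := iL) (i2 := i2)).
1-3: by rewrite -val_eqE /=; lia.
- by move=> j /lam_i2_le; apply: lt_le_trans.
- by lra.
- by apply: lam_Gamma; lia.
- by lra.
- by rewrite -ltnNge.
- by move=> j; rewrite -(comp_atE _ n_gt0); exact: lam_tail_lt.
- by move=> j; rewrite -ltnNge -(comp_atE _ n_gt0); exact: lam_head.
- by move=> j; rewrite -val_eqE -ltnNge /= => j_neq0 j_lt_m; apply: xi_head; lia.
Qed.
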